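(* Let $\bar a,\bar b$ realize the same complete type over $\emptyset$, suppose $tp(\bar a/\bar b)$ is not semi-isolated, and suppose $\varphi(\bar x,\bar a)\in tp(\bar b/\bar a)$ is a formula witnessing that $tp(\bar b/\bar a)$ is semi-isolated (i.e. every realization of $\varphi(\bar x,\bar a)$ realizes $tp(\bar b)$). Let $\bar c$ be any tuple with $tp(\bar c\bar b)=tp(\bar b\bar a)$. Then the formula $\varphi(\bar c,\bar x)\wedge\varphi(\bar x,\bar a)$ forks over $\emptyset$; in particular $tp(\bar b/\bar c\bar a)$ forks over $\emptyset$.
   Context: Work in the monster model of a complete first-order theory $T$. A (possibly partial) type $p$ forks over a set $A$ if there are an $L$-formula $\psi(\bar x,\bar y)$ and tuples $\bar d_i$ ($i<\omega$) such that $p\vdash\psi(\bar x,\bar d_0)$, $tp(\bar d_i/A)=tp(\bar d_0/A)$ for all $i$, and $\{\psi(\bar x,\bar d_i)\mid i<\omega\}$ is $k$-inconsistent for some $k<\omega$; a formula forks if the partial type consisting of it forks. $tp(\bar b/\bar a)$ is semi-isolated if there is a formula $\varphi(\bar x,\bar a)\in tp(\bar b/\bar a)$ every realization of which realizes $tp(\bar b)$. *)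

From Stdlib Require List.
From mathcomp Require Import all_boot.
Set Implicit Arguments.
Unset Strict Implicit.
Unset Printing Implicit Defensive.

Record signature := Signature {
  fsym : Type; farity : fsym -> nat;
  rsym : Type; rarity : rsym -> nat }.

Section Syntax.
Variable L : signature.

Inductive term : Type :=
  | tvar : nat -> term
  | tapp : forall f : fsym L, ('I_(farity f) -> term) -> term.

Inductive form : Type :=
  | fFalse : form
  | fEq : term -> term -> form
  | fRel : forall r : rsym L, ('I_(rarity r) -> term) -> form
  | fNeg : form -> form
  | fAnd : form -> form -> form
  | fEx : form -> form.

Fixpoint tbnd (n : nat) (t : term) : Prop :=
  match t with
  | tvar k => k < n
  | tapp f a => forall i, tbnd n (a i)
  end.

Fixpoint fbnd (n : nat) (phi : form) : Prop :=
  match phi with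
  | fFalse => True
  | fEq t1 t2 => tbnd n t1 /\ tbnd n t2
  | fRel r a => forall i, tbnd n (a i)
  | fNeg p => fbnd n p
  | fAnd p q => fbnd n p /\ fbnd n q
  | fEx p => fbnd n.+1 p
  end.
End Syntax.

Record structure (L : signature) := Structure {
  carrier :> Type;
  inhabitant : carrier;
  interpF : forall f : fsym L, ('I_(farity f) -> carrier) -> carrier;
  interpR : forall r : rsym L, ('I_(rarity r) -> carrier) -> Prop }.

Section Semantics.
Variables (L : signature) (M : structure L).

Fixpoint teval (v : nat -> M) (t : term L) : M :=
  match t with
  | tvar k => v k
  | tapp f a => @interpF L M f (fun i => teval v (a i))
  end.

Definition scons (m : M) (v : nat -> M) : nat -> M :=
  fun k => match k with 0 => m | k'.+1 => v k' end.

Fixpoint sat (v : nat -> M) (phi : form L) : Prop :=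
  match phi with
  | fFalse => False
  | fEq t1 t2 => teval v t1 = teval v t2
  | fRel r a => @interpR L M r (fun i => teval v (a i))
  | fNeg p => ~ sat v p
  | fAnd p q => sat v p /\ sat v q
  | fEx p => exists m : M, sat (scons m v) p
  end.

Definition tval (n : nat) (x : 'I_n -> M) : nat -> M :=
  fun k => match insub k with Some i => x i | None => inhabitant M end.

Definition tcat (n m : nat) (x : 'I_n -> M) (y : 'I_m -> M) : 'I_(n + m) -> M :=
  fun i => match split i with inl j => x j | inr j => y j end.

Definition holds (n : nat) (phi : form L) (x : 'I_n -> M) : Prop :=
  sat (tval x) phi.

Definition same_type (n : nat) (x y : 'I_n -> M) : Prop :=
  forall phi : form L, fbnd n phi -> (holds phi x <-> holds phi y).

Definition semi_isolating (n m : nat) (phi : form L)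
    (b : 'I_n -> M) (a : 'I_m -> M) : Prop :=
  fbnd (n + m) phi /\ holds phi (tcat b a) /\
  forall x : 'I_n -> M, holds phi (tcat x a) -> same_type x b.

Definition semi_isolated (n m : nat) (b : 'I_n -> M) (a : 'I_m -> M) : Prop :=
  exists phi : form L, semi_isolating phi b a.

(** A partial type p(x) in n variables, given by its set of realizations P,
    forks over the empty set. *)
Definition k_inconsistent (n m : nat) (psi : form L) (d : nat -> 'I_m -> M)
    (k : nat) : Prop :=
  forall S : seq nat, uniq S -> size S = k ->
    ~ (exists x : 'I_n -> M, forall i, i \in S -> holds psi (tcat x (d i))).

Definition forks_over_empty (n : nat) (P : ('I_n -> M) -> Prop) : Prop :=
  exists (m : nat) (psi : form L) (d : nat -> 'I_m -> M) (k : nat),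
    fbnd (n + m) psi /\
    (forall x, P x -> holds psi (tcat x (d 0))) /\
    (forall i, same_type (d i) (d 0)) /\
    k_inconsistent n psi d k.

(** Saturation: M is aleph_1-saturated, i.e. every finitely satisfiable set
    of formulas in finitely many variables with parameters from a countable
    set (range of p) is realized in M. *)
Record pform : Type := PForm { pm : nat; pf : form L; pe : 'I_pm -> M }.

Definition aleph1_saturated : Prop :=
  forall (n : nat) (p : nat -> M) (Sigma : pform -> Prop),
    (forall q, Sigma q ->
       fbnd (n + pm q) (pf q) /\ forall i, exists j, @pe q i = p j) ->
    (forall s : list pform, List.Forall Sigma s ->
       exists x : 'I_n -> M,
         List.Forall (fun q => holds (pf q) (tcat x (@pe q))) s) ->
    exists x : 'I_n -> M, forall q, Sigma q -> holds (pf q) (tcat x (@pe q)).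
End Semantics.

(* Saturation lets us continue c b a to a sequence g 0 = a, g 1 = c, g 2, ... with elements
   h i such that every triple g (i+1), h i, g i realizes tp(c b a).  The parameters
   g (i+1) g i all realize tp(c a), and at i = 0 the formula phi(y, x) /\ phi(x, z) on
   them is the one of the theorem.  Because phi(x, a) isolates tp(b) = tp(a), every
   instance phi(u, v) with v realizing tp(a) makes tp(u/v) semi-isolated, and
   semi-isolation is transitive.  So an x satisfying the formula at two indices i and
   l >= i + 2 would give semi-isolations
     h (l-1) -> g (l-1) -> h (l-2) -> ... -> g (i+1) -> x -> g l,
   i.e. tp(h (l-1) / g l) = tp(a/b) would be semi-isolated.  Hence the formula is
   3-inconsistent along the sequence. *)

From Pilot Require Import Defs.
From mathcomp Require Import all_boot zify.
From Stdlib Require Import Classical FunctionalExtensionality ClassicalEpsilon.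
Set Implicit Arguments.
Unset Strict Implicit.
Unset Printing Implicit Defensive.

Section Renaming.
Variable L : signature.

Fixpoint tren (s : nat -> nat) (t : term L) : term L :=
  match t with
  | tvar k => tvar L (s k)
  | tapp f a => tapp (fun i => tren s (a i))
  end.

Definition up (s : nat -> nat) (k : nat) : nat :=
  if k is k'.+1 then (s k').+1 else 0.

Fixpoint fren (s : nat -> nat) (p : form L) : form L :=
  match p with
  | fFalse => fFalse L
  | fEq t1 t2 => fEq (tren s t1) (tren s t2)
  | fRel r a => fRel (fun i => tren s (a i))
  | fNeg q => fNeg (fren s q)
  | fAnd q1 q2 => fAnd (fren s q1) (fren s q2)
  | fEx q => fEx (fren (up s) q)
  end.

Lemma tbnd_ren (t : term L) K N s :
  tbnd K t -> (forall k, k < K -> s k < N) -> tbnd N (tren s t).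
Proof. by elim: t => [k|f a IH] /= hb hs; [exact: hs | move=> i; exact: IH]. Qed.

Lemma fbnd_ren (p : form L) K N s :
  fbnd K p -> (forall k, k < K -> s k < N) -> fbnd N (fren s p).
Proof.
elim: p K N s => [|t1 t2|r a|q IH|q1 IH1 q2 IH2|q IH] K N s //= hb hs.
- by split; apply: tbnd_ren hs; [exact: hb.1 | exact: hb.2].
- by move=> i; apply: tbnd_ren (hb i) hs.
- exact: IH hb hs.
- by split; [exact: IH1 hb.1 hs | exact: IH2 hb.2 hs].
- by apply: IH hb _ => -[|k] //= hk; apply: hs.
Qed.

Lemma tbnd_mono (t : term L) n n' : n <= n' -> tbnd n t -> tbnd n' t.
Proof. by elim: t => [k|f a IH] /= hn hb; [lia | move=> i; exact: IH]. Qed.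

Lemma fbnd_mono (p : form L) n n' : n <= n' -> fbnd n p -> fbnd n' p.
Proof.
elim: p n n' => [|t1 t2|r a|q IH|q1 IH1 q2 IH2|q IH] n n' //= hn hb.
- by split; apply: tbnd_mono hn _; [exact: hb.1 | exact: hb.2].
- by move=> i; apply: tbnd_mono hn (hb i).
- exact: IH hn hb.
- by split; [exact: IH1 hn hb.1 | exact: IH2 hn hb.2].
- exact: IH hb.
Qed.

End Renaming.

Section Evaluation.
Variables (L : signature) (M : structure L).

Lemma teval_bnd (t : term L) n (v w : nat -> M) :
  tbnd n t -> (forall k, k < n -> v k = w k) -> teval v t = teval w t.
Proof.
elim: t => [k|f a IH] /= hb hvw; first exact: hvw.
by congr interpF; apply: functional_extensionality => i; apply: IH.
Qed.

Lemma sat_bnd (p : form L) n (v w : nat -> M) :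
  fbnd n p -> (forall k, k < n -> v k = w k) -> (sat v p <-> sat w p).
Proof.
elim: p n v w => [|t1 t2|r a|q IH|q1 IH1 q2 IH2|q IH] n v w //= hb hvw.
- by rewrite (teval_bnd hb.1 hvw) (teval_bnd hb.2 hvw).
- suff -> : (fun i => teval v (a i)) = (fun i => teval w (a i)) by [].
  by apply: functional_extensionality => i; apply: teval_bnd (hb i) hvw.
- by rewrite (IH n v w hb hvw).
- by rewrite (IH1 n v w hb.1 hvw) (IH2 n v w hb.2 hvw).
- have hvw' m : forall k, k < n.+1 -> scons m v k = scons m w k.
    by move=> [|k] //= hk; apply: hvw.
  by split=> -[m hm]; exists m; apply/(IH n.+1 (scons m v) (scons m w) hb (hvw' m)).
Qed.

Lemma teval_ren (t : term L) s (v : nat -> M) :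
  teval v (tren s t) = teval (v \o s) t.
Proof.
elim: t => [k|f a IH] //=.
by congr interpF; apply: functional_extensionality => i; apply: IH.
Qed.

Lemma sat_ren (p : form L) s (v : nat -> M) :
  sat v (fren s p) <-> sat (v \o s) p.
Proof.
elim: p s v => [|t1 t2|r a|q IH|q1 IH1 q2 IH2|q IH] s v //=.
- by rewrite !teval_ren.
- suff -> : (fun i => teval v (tren s (a i))) = (fun i => teval (v \o s) (a i)) by [].
  by apply: functional_extensionality => i; apply: teval_ren.
- by rewrite IH.
- by rewrite IH1 IH2.
- have E m : scons m v \o up s = scons m (v \o s).
    by apply: functional_extensionality => -[|k].
  by split=> -[m hm]; exists m; move: hm; rewrite IH E.
Qed.

End Evaluation.

Definition vcat (T : Type) (n : nat) (f g : nat -> T) (k : nat) : T :=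
  if k < n then f k else g (k - n).

Section Tuples.
Variables (L : signature) (M : structure L).

Lemma tval_lt n (x : 'I_n -> M) k (hk : k < n) : Defs.tval x k = x (Ordinal hk).
Proof. by rewrite /Defs.tval insubT. Qed.

Lemma tval_ge n (x : 'I_n -> M) k : n <= k -> Defs.tval x k = inhabitant M.
Proof. by move=> hk; rewrite /Defs.tval insubF //; lia. Qed.

Lemma tval_tcat n m (x : 'I_n -> M) (y : 'I_m -> M) :
  Defs.tval (tcat x y) = vcat n (Defs.tval x) (Defs.tval y).
Proof.
apply: functional_extensionality => k; rewrite /vcat.
have [hk|hk] := ltnP k (n + m); last first.
  by rewrite tval_ge //; case: ifP => h; [lia | rewrite tval_ge //; lia].
rewrite (tval_lt _ hk) /tcat; case: splitP => j /= hj.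
- have hkn : k < n by rewrite hj.
  by rewrite hkn (tval_lt _ hkn); congr x; apply: val_inj.
- have hkn : k < n = false by lia.
  have hkm : k - n < m by lia.
  by rewrite hkn (tval_lt _ hkm); congr y; apply: val_inj => /=; lia.
Qed.

Lemma tcat_surj n m (w : 'I_(n + m) -> M) :
  exists (x : 'I_n -> M) (y : 'I_m -> M), tcat x y = w.
Proof.
exists (fun j => w (lshift m j)), (fun j => w (rshift n j)).
by apply: functional_extensionality => i; rewrite /tcat; case: splitP => j hj;
  congr w; apply: val_inj.
Qed.

Lemma holds_ren N K (p : form L) s (X : 'I_N -> M) (Y : 'I_K -> M) :
  fbnd K p -> (forall k, k < K -> Defs.tval Y k = Defs.tval X (s k)) ->
  (holds (fren s p) X <-> holds p Y).
Proof.
move=> hb hY; rewrite /holds sat_ren.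
by apply: sat_bnd hb _ => k hk /=; rewrite hY.
Qed.

Lemma holds_tcatl n m (p : form L) (x : 'I_n -> M) (y : 'I_m -> M) :
  fbnd n p -> (holds p (tcat x y) <-> holds p x).
Proof.
by move=> hb; rewrite /holds tval_tcat; apply: sat_bnd hb _ => k hk; rewrite /vcat hk.
Qed.

Definition exn (n : nat) (p : form L) : form L := iter n (@fEx L) p.

Lemma fbnd_exn n m (p : form L) : fbnd (n + m) p -> fbnd m (exn n p).
Proof. by elim: n m => [|n IH] m hb //=; apply: IH; rewrite addnS -addSn. Qed.

Lemma vcat0 (f v : nat -> M) : vcat 0 f v = v.
Proof. by apply: functional_extensionality => k; rewrite /vcat subn0. Qed.

Lemma vcatS n (f v : nat -> M) : vcat n.+1 f v = vcat n f (scons (f n) v).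
Proof.
apply: functional_extensionality => k; rewrite /vcat.
case: (ltngtP k n) => hk; first by rewrite ltnW.
- by rewrite ltnNge hk /=; have -> : k - n = (k - n.+1).+1 by lia.
- by rewrite hk ltnSn subnn.
Qed.

Lemma vcat_eq n (f f' v : nat -> M) :
  (forall k, k < n -> f k = f' k) -> vcat n f v = vcat n f' v.
Proof.
by move=> hff; apply: functional_extensionality => k; rewrite /vcat; case: ifP => // /hff.
Qed.

Lemma sat_exn n (p : form L) (v : nat -> M) :
  sat v (exn n p) <-> exists f, sat (vcat n f v) p.
Proof.
elim: n v => [|n IH] v /=; first by split=> [hp|[f]]; [exists v|]; rewrite vcat0.
split=> [[m /IH [f hf]]|[f hf]].
- exists (fun k => if k < n then f k else m); rewrite vcatS ltnn.
  by rewrite (@vcat_eq n _ f) // => k ->.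
- by exists (f n); apply/IH; exists f; rewrite -vcatS.
Qed.

Lemma holds_exn n m (p : form L) (X : 'I_m -> M) :
  fbnd (n + m) p ->
  (holds (exn n p) X <-> exists y : 'I_n -> M, holds p (tcat y X)).
Proof.
move=> hb; rewrite /holds sat_exn; split=> [[f hf]|[y hy]].
- exists (fun i => f (val i)); rewrite tval_tcat.
  apply: (sat_bnd hb _).1 hf => k hk; rewrite /vcat; case: ifP => // h.
  by rewrite (tval_lt _ h).
- by exists (Defs.tval y); rewrite -tval_tcat.
Qed.
End Tuples.

Section Types.
Variables (L : signature) (M : structure L).

Definition fcomp (n m : nat) (t1 t2 : form L) : form L :=
  fAnd (fren (fun k => if k < n then k + m else k - n) t1)
       (fren (fun k => if k < m then k else k + n) t2).

Ltac tval_cases :=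
  move=> j hj; rewrite ?tval_tcat /vcat; repeat (case: ifP => ?); try lia;
  try (f_equal; lia).

Lemma fbnd_fcomp n m k (t1 t2 : form L) :
  fbnd (n + m) t1 -> fbnd (m + k) t2 -> fbnd (m + (n + k)) (fcomp n m t1 t2).
Proof.
by move=> h1 h2; split; [apply: fbnd_ren h1 _ | apply: fbnd_ren h2 _] => j; case: ifP; lia.
Qed.

Lemma holds_fcomp n m k (t1 t2 : form L)
    (x : 'I_n -> M) (y : 'I_m -> M) (z : 'I_k -> M) :
  fbnd (n + m) t1 -> fbnd (m + k) t2 ->
  (holds (fcomp n m t1 t2) (tcat y (tcat x z)) <->
   holds t1 (tcat x y) /\ holds t2 (tcat y z)).
Proof.
move=> h1 h2; rewrite /holds /= -!/(holds _ _).
rewrite (holds_ren h1 (Y := tcat x y)); last by tval_cases.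
by rewrite (holds_ren h2 (Y := tcat y z)) //; tval_cases.
Qed.

Lemma same_type_sym n (x y : 'I_n -> M) : same_type x y -> same_type y x.
Proof. by move=> h p hp; symmetry; apply: h. Qed.

Lemma same_type_trans n (x y z : 'I_n -> M) :
  same_type x y -> same_type y z -> same_type x z.
Proof. by move=> h1 h2 p hp; rewrite (h1 p hp); apply: h2. Qed.

Lemma same_type_ren N K s (X Y : 'I_N -> M) (V W : 'I_K -> M) :
  same_type X Y -> (forall k, k < K -> s k < N) ->
  (forall k, k < K -> Defs.tval V k = Defs.tval X (s k)) ->
  (forall k, k < K -> Defs.tval W k = Defs.tval Y (s k)) -> same_type V W.
Proof.
move=> hXY hs hV hW p hp.
by rewrite -(holds_ren hp hV) -(holds_ren hp hW); apply: hXY; apply: fbnd_ren hp hs.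
Qed.

Section Projections.
Variables (n m k : nat) (x x' : 'I_n -> M) (y y' : 'I_m -> M) (z z' : 'I_k -> M).

Lemma same_type_tcatl : same_type (tcat x y) (tcat x' y') -> same_type x x'.
Proof. by move=> h; apply: (same_type_ren (s := id) h); tval_cases. Qed.

Lemma same_type_tcatr : same_type (tcat x y) (tcat x' y') -> same_type y y'.
Proof. by move=> h; apply: (same_type_ren (s := fun j => j + n) h); tval_cases. Qed.

Lemma same_type_tcatC : same_type (tcat x y) (tcat x' y') -> same_type (tcat y x) (tcat y' x').
Proof.
move=> h; apply: (same_type_ren (s := fun j => if j < m then j + n else j - m) h).
all: tval_cases.
Qed.

Lemma same_type_tcat23 :
  same_type (tcat (tcat x y) z) (tcat (tcat x' y') z') -> same_type (tcat y z) (tcat y' z').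
Proof. by move=> h; apply: (same_type_ren (s := fun j => j + n) h); tval_cases. Qed.

Lemma same_type_tcat13 :
  same_type (tcat (tcat x y) z) (tcat (tcat x' y') z') -> same_type (tcat x z) (tcat x' z').
Proof.
move=> h; apply: (same_type_ren (s := fun j => if j < n then j else j + m) h).
all: tval_cases.
Qed.

End Projections.
End Types.

Section SemiIsolation.
Variables (L : signature) (M : structure L).

Lemma same_type_forall n m (p : form L) (v w : 'I_m -> M) :
  same_type v w -> fbnd (n + m) p ->
  (forall x : 'I_n -> M, holds p (tcat x v)) -> forall x : 'I_n -> M, holds p (tcat x w).
Proof.
move=> hvw hb hall x.
have hb' : fbnd (n + m) (fNeg p) by [].
have /(hvw _ (fbnd_exn hb')) : holds (fNeg (exn n (fNeg p))) v.
  by rewrite /holds /= -/(holds _ v) holds_exn // => -[y]; apply; apply: hall.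
rewrite /holds /= -/(holds _ w) holds_exn // => hn.
by apply: NNPP => hx; apply: hn; exists x.
Qed.

Lemma same_type_forall_impl n m (th rho : form L) (v w : 'I_m -> M) :
  same_type v w -> fbnd (n + m) th -> fbnd n rho ->
  (forall x : 'I_n -> M, holds th (tcat x v) -> holds rho x) ->
  forall x : 'I_n -> M, holds th (tcat x w) -> holds rho x.
Proof.
move=> hvw hth hrho h x hx.
have hb : fbnd (n + m) (fNeg (fAnd th (fNeg rho))).
  by split => //; apply: fbnd_mono hrho; apply: leq_addr.
have himp (x' : 'I_n -> M) : holds (fNeg (fAnd th (fNeg rho))) (tcat x' v).
  by move=> [h1 h2]; apply: h2; apply/(holds_tcatl _ _ hrho); apply: h.
have /= hn := same_type_forall hvw hb himp x.
by apply: NNPP => hr; apply: hn; split=> // /(holds_tcatl _ _ hrho).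
Qed.

Lemma same_type_isolates n m (th : form L) (u : 'I_n -> M) (v w : 'I_m -> M) :
  same_type v w -> fbnd (n + m) th ->
  (forall x : 'I_n -> M, holds th (tcat x v) -> same_type x u) ->
  forall x : 'I_n -> M, holds th (tcat x w) -> same_type x u.
Proof.
move=> hvw hth h x hx rho hrho.
have [hu|hu] := classic (holds rho u).
- split=> // _; apply: (same_type_forall_impl hvw hth hrho) hx => x' hx'.
  by apply/(h x' hx' rho hrho).
- have hnrho : fbnd n (fNeg rho) by [].
  split=> // hr; exfalso.
  apply: (same_type_forall_impl hvw hth hnrho) hx hr => x' hx' hr'.
  by apply: hu; apply/(h x' hx' rho hrho).
Qed.

Lemma semi_isolated_same_type n m (u u' : 'I_n -> M) (v v' : 'I_m -> M) :
  same_type (tcat u v) (tcat u' v') -> semi_isolated u v -> semi_isolated u' v'.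
Proof.
move=> huv [th [hth [huvth hiso]]]; exists th; split=> //; split.
  exact: (huv th hth).1.
move=> x hx; apply: same_type_trans (same_type_tcatl huv).
exact: same_type_isolates (same_type_tcatr huv) hth hiso x hx.
Qed.

Lemma semi_isolated_trans n m k (u : 'I_n -> M) (v : 'I_m -> M) (w : 'I_k -> M) :
  semi_isolated u v -> semi_isolated v w -> semi_isolated u w.
Proof.
move=> [t1 [hb1 [h1 iso1]]] [t2 [hb2 [h2 iso2]]].
have hb := fbnd_fcomp hb1 hb2.
exists (exn m (fcomp n m t1 t2)); split; first exact: fbnd_exn.
split; first by apply/holds_exn => //; exists v; apply/holds_fcomp.
move=> x /holds_exn -/(_ hb) [y /holds_fcomp -/(_ hb1 hb2) [hxy hyw]].
exact: same_type_isolates (same_type_sym (iso2 y hyw)) hb1 iso1 x hxy.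
Qed.

Lemma same_type_extend (Msat : aleph1_saturated M) n m
    (b : 'I_n -> M) (a a' : 'I_m -> M) :
  same_type a a' -> exists b' : 'I_n -> M, same_type (tcat b' a') (tcat b a).
Proof.
move=> haa.
pose Sigma q := exists th : form L,
  fbnd (n + m) th /\ holds th (tcat b a) /\ q = PForm th a'.
have Sigma_bnd q : Sigma q ->
    fbnd (n + pm q) (pf q) /\ forall i, exists j, @pe _ _ q i = Defs.tval a' j.
  move=> [th [hb [_ ->]]] /=; split=> // i; exists (val i).
  by rewrite (tval_lt _ (ltn_ord i)); congr a'; apply: val_inj.
have Sigma_fin (s : list (pform M)) : List.Forall Sigma s ->
    exists x : 'I_n -> M, List.Forall (fun q => holds (pf q) (tcat x (@pe _ _ q))) s.
  move=> hs.
  have [Th [hTb [hTh hTx]]] : exists Th : form L,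
      fbnd (n + m) Th /\ holds Th (tcat b a) /\
      forall x : 'I_n -> M, holds Th (tcat x a') ->
        List.Forall (fun q => holds (pf q) (tcat x (@pe _ _ q))) s.
    elim: hs => [|q s0 [th [hb [hth ->]]] _ [Th [hTb [hTh hTx]]]].
      by exists (fNeg (fFalse L)); split=> //; split=> // x _; constructor.
    exists (fAnd th Th); split; first by split.
    by split; [split | move=> x [h1 h2]; constructor => //; apply: hTx].
  have /(haa _ (fbnd_exn hTb)) : holds (exn n Th) a by apply/holds_exn => //; exists b.
  by move=> /holds_exn -/(_ hTb) [x hx]; exists x; apply: hTx.
have [b' hb'] := Msat n (Defs.tval a') Sigma Sigma_bnd Sigma_fin.
exists b' => p hp; split=> hh.
- apply: NNPP => hn.
  by have /hb' : Sigma (PForm (fNeg p) a') by exists (fNeg p).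
- by have /hb' : Sigma (PForm p a') by exists p.
Qed.

End SemiIsolation.

Section Chain.
Variables (L : signature) (M : structure L).

Lemma type_chain (Msat : aleph1_saturated M) n m
    (a c : 'I_n -> M) (b : 'I_m -> M) :
  same_type c a ->
  exists (g : nat -> 'I_n -> M) (h : nat -> 'I_m -> M),
    g 0 = a /\ g 1 = c /\
    forall i, same_type (tcat (tcat (g i.+1) (h i)) (g i)) (tcat (tcat c b) a).
Proof.
move=> hca.
have [step hstep] : exists step : ('I_n -> M) -> ('I_n -> M) * ('I_m -> M),
    forall u, same_type u a ->
      same_type (tcat (tcat (step u).1 (step u).2) u) (tcat (tcat c b) a).
  apply: (choice (fun u (q : ('I_n -> M) * ('I_m -> M)) => same_type u a ->
    same_type (tcat (tcat q.1 q.2) u) (tcat (tcat c b) a))) => u.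
  have [hu|hu] := classic (same_type u a); last by exists (c, b).
  have [w hw] := same_type_extend Msat (tcat c b) (same_type_sym hu).
  by have [x [y ewxy]] := tcat_surj w; exists (x, y); rewrite ewxy.
pose p := fix p i := if i is j.+1 then step (p j).1 else (c, b).
exists (fun i => if i is j.+1 then (p j).1 else a), (fun i => (p i).2).
split=> //; split=> //; elim=> [//|i IH].
apply: hstep; apply: same_type_trans (same_type_tcatl (same_type_tcatl IH)) hca.
Qed.

Lemma k_inconsistent3 n m (psi : form L) (d : nat -> 'I_m -> M) :
  (forall (x : 'I_n -> M) i l, i.+2 <= l ->
     holds psi (tcat x (d i)) -> holds psi (tcat x (d l)) -> False) ->
  k_inconsistent n psi d 3.
Proof.
move=> far [|i [|j [|l [|]]]] //= + _ [x hx].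
rewrite !inE !negb_or => /and3P [/andP [hij hil] hjl _].
have hxS k : k \in [:: i; j; l] -> holds psi (tcat x (d k)) by apply: hx.
have F k k' : k \in [:: i; j; l] -> k' \in [:: i; j; l] -> k.+2 <= k' -> False.
  by move=> hk hk' hkk'; apply: far x k k' hkk' (hxS k hk) (hxS k' hk').
have := F i j; have := F j i; have := F i l; have := F l i; have := F j l; have := F l j.
rewrite !inE !eqxx !orbT /=.
lia.
Qed.

End Chain.

Section Forking.
Variables (L : signature) (M : structure L) (n : nat) (a b : 'I_n -> M) (phi : form L).
Hypotheses (hab : same_type a b) (hnsi : ~ semi_isolated a b)
  (hphi : semi_isolating phi b a).

Lemma phi_same_type (u v : 'I_n -> M) :
  same_type v a -> holds phi (tcat u v) -> same_type u a.
Proof.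
have [hbphi [_ hiso]] := hphi.
move=> hva; apply: (same_type_isolates (same_type_sym hva) hbphi) => x hx.
exact: same_type_trans (hiso x hx) (same_type_sym hab).
Qed.

Lemma phi_semi_isolated (u v : 'I_n -> M) :
  same_type v a -> holds phi (tcat u v) -> semi_isolated u v.
Proof.
move=> hva huv; exists phi; split; first exact: hphi.1.
split=> // x hx; apply: same_type_trans (phi_same_type hva hx) _.
exact: same_type_sym (phi_same_type hva huv).
Qed.

Variables (c : 'I_n -> M) (g h : nat -> 'I_n -> M).
Hypotheses (hc : same_type (tcat c b) (tcat b a))
  (hgh : forall i, same_type (tcat (tcat (g i.+1) (h i)) (g i)) (tcat (tcat c b) a)).

Lemma chain_semi_isolated i j : i <= j -> semi_isolated (h j) (g i).
Proof.
have [hbphi [hphiba _]] := hphi.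
have hba := same_type_sym hab.
have hgj j' : same_type (g j') a by apply: same_type_tcatr (hgh j').
have hhj j' : same_type (h j') a.
  by apply: same_type_trans hba; apply: same_type_tcatr (same_type_tcatl (hgh j')).
have si_hg j' : semi_isolated (h j') (g j').
  exact: phi_semi_isolated (hgj j') ((same_type_tcat23 (hgh j') hbphi).2 hphiba).
have si_gh j' : semi_isolated (g j'.+1) (h j').
  apply: phi_semi_isolated (hhj j') _.
  exact: (same_type_trans (same_type_tcatl (hgh j')) hc hbphi).2 hphiba.
elim: j => [|j IH]; first by rewrite leqn0 => /eqP ->.
rewrite leq_eqVlt => /orP [/eqP -> //|/IH hj].
exact: semi_isolated_trans (semi_isolated_trans (si_hg j.+1) (si_gh j)) hj.
Qed.

Lemma chain_nonadjacent (x : 'I_n -> M) i l : i.+2 <= l ->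
  holds (fcomp n n phi phi) (tcat x (tcat (g i.+1) (g i))) ->
  holds (fcomp n n phi phi) (tcat x (tcat (g l.+1) (g l))) -> False.
Proof.
have hbphi := hphi.1.
move=> hil /(holds_fcomp _ _ _ hbphi hbphi) [hgx _].
move=> /(holds_fcomp _ _ _ hbphi hbphi) [_ hxg].
have hgl : same_type (g l) a by apply: same_type_tcatr (hgh l).
have hxa := phi_same_type hgl hxg.
have si_gx := phi_semi_isolated hxa hgx.
have si_xg := phi_semi_isolated hgl hxg.
have si_hg : semi_isolated (h l.-1) (g i.+1) by apply: chain_semi_isolated; lia.
apply: hnsi; apply: semi_isolated_same_type
  (semi_isolated_trans si_hg (semi_isolated_trans si_gx si_xg)).
apply: same_type_tcatC.
have hl : l.-1.+1 = l by lia.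
by move: (same_type_tcatl (hgh l.-1)); rewrite hl => /same_type_trans; apply.
Qed.

End Forking.

Theorem mainTheorem6 (L : signature) (M : structure L)
    (Msat : aleph1_saturated M)
    (n : nat) (a b : 'I_n -> M)
    (hab : same_type a b)
    (hnsi : ~ semi_isolated a b)
    (phi : form L) (hphi : semi_isolating phi b a)
    (c : 'I_n -> M) (hc : same_type (tcat c b) (tcat b a)) :
  forks_over_empty
    (fun x : 'I_n -> M => holds phi (tcat c x) /\ holds phi (tcat x a))
  /\ forks_over_empty
    (fun x : 'I_n -> M =>
       same_type (tcat x (tcat c a)) (tcat b (tcat c a))).
Proof.
have [hbphi [hphiba _]] := hphi.
have hca : same_type c a := same_type_trans (same_type_tcatl hc) (same_type_sym hab).
have [g [h [g0 [g1 hgh]]]] := type_chain Msat b hca.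
pose psi := fcomp n n phi phi.
have hbpsi : fbnd (n + (n + n)) psi := fbnd_fcomp hbphi hbphi.
have psi_ca (x : 'I_n -> M) :
    holds psi (tcat x (tcat c a)) <-> holds phi (tcat c x) /\ holds phi (tcat x a).
  exact: holds_fcomp.
pose d i := tcat (g i.+1) (g i).
have d0 : d 0 = tcat c a by rewrite /d g0 g1.
have hd i : same_type (d i) (d 0) by rewrite d0; apply: same_type_tcat13 (hgh i).
have hk : k_inconsistent n psi d 3.
  apply: k_inconsistent3 => x i l hil hxi hxl.
  exact: (chain_nonadjacent hab hnsi hphi hc hgh hil hxi hxl).
split; exists (n + n), psi, d, 3; split=> //; split=> //; rewrite d0.
- by move=> x /psi_ca.
- move=> x hx; apply: (hx psi hbpsi).2; apply/psi_ca; split=> //.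
  exact: (hc phi hbphi).2 hphiba.
Qed.
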